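(* Let $L$ be the digraph with vertex set $\mathbb{Z}\times\{-1,0,1\}$ in which $((i,x),(j,y))$ is an edge if and only if $j=i+1$ and either $i$ is even, or $i$ is odd and $x+y\neq 0$. Let $\varphi^1,\varphi^2:V(L)\to\mathbb{Z}$ be given by $\varphi^1((i,x))=i$ and $\varphi^2((i,x))=i+1$. Then the layerwise direct product $D=L\,{}_{\varphi^1}\!\!\times_{\varphi^2}L$ is highly arc transitive.
   Context: The integer-line digraph is $Z=(\mathbb{Z},\{(i,i+1)\mid i\in\mathbb{Z}\})$; $\varphi^1,\varphi^2$ are epimorphisms $L\to Z$. For digraphs $G^1=(V^1,E^1)$, $G^2=(V^2,E^2)$ with epimorphisms $\varphi^1:G^1\to Z$, $\varphi^2:G^2\to Z$, the layerwise direct product $G^1\,{}_{\varphi^1}\!\!\times_{\varphi^2}G^2$ is the digraph with vertex set $\{(x,y)\mid x\in V^1,y\in V^2,\varphi^1(x)=\varphi^2(y)\}$ and edge set $\{((a,b),(x,y))\mid (a,x)\in E^1,(b,y)\in E^2\}$. An $n$-arc is a sequence of directed edges $e_0,\dots,e_{n-1}$ with the terminal vertex of $e_i$ equal to the initial vertex of $e_{i+1}$. A digraph is highly arc transitive if for every $n\in\mathbb{N}$ its automorphism group acts transitively on its (nonempty set of) $n$-arcs. *)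

From Stdlib Require Import ZArith List.
Import ListNotations.
Open Scope Z_scope.

Record digraph := Digraph { vtx : Type; edge : vtx -> vtx -> Prop }.

Definition Zline : digraph := Digraph Z (fun i j => j = i + 1).

Definition is_hom (G H : digraph) (f : vtx G -> vtx H) : Prop :=
  forall x y, edge G x y -> edge H (f x) (f y).
Definition is_epi (G H : digraph) (f : vtx G -> vtx H) : Prop :=
  is_hom G H f /\ (forall v, exists x, f x = v) /\
  (forall u v, edge H u v -> exists x y, edge G x y /\ f x = u /\ f y = v).

Definition layer_vtx (G1 G2 : digraph) (phi1 : vtx G1 -> Z) (phi2 : vtx G2 -> Z)
  : Type := { p : vtx G1 * vtx G2 | phi1 (fst p) = phi2 (snd p) }.

Definition layer_prod (G1 G2 : digraph) (phi1 : vtx G1 -> Z) (phi2 : vtx G2 -> Z)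
  : digraph :=
  Digraph (layer_vtx G1 G2 phi1 phi2)
    (fun u v => edge G1 (fst (proj1_sig u)) (fst (proj1_sig v)) /\
                edge G2 (snd (proj1_sig u)) (snd (proj1_sig v))).

Definition is_aut (G : digraph) (f : vtx G -> vtx G) : Prop :=
  (exists g : vtx G -> vtx G, (forall x, g (f x) = x) /\ (forall y, f (g y) = y)) /\
  (forall x y, edge G x y <-> edge G (f x) (f y)).

Fixpoint is_chain (G : digraph) (s : list (vtx G * vtx G)) : Prop :=
  match s with
  | [] => True
  | e :: s' => edge G (fst e) (snd e) /\
               match s' with [] => True | e' :: _ => snd e = fst e' end /\
               is_chain G s'
  end.

Definition is_arc (G : digraph) (n : nat) (s : list (vtx G * vtx G)) : Prop :=
  length s = n /\ is_chain G s.

Definition map_arc (G : digraph) (f : vtx G -> vtx G) (s : list (vtx G * vtx G)) :=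
  map (fun e => (f (fst e), f (snd e))) s.

Definition highly_arc_transitive (G : digraph) : Prop :=
  forall n : nat,
    (exists s, is_arc G n s) /\
    (forall s t, is_arc G n s -> is_arc G n t ->
       exists f, is_aut G f /\ map_arc G f s = t).

Inductive sgn := Mn | Zr | Pl.
Definition sgnZ (x : sgn) : Z := match x with Mn => -1 | Zr => 0 | Pl => 1 end.

Definition L_edge (u v : Z * sgn) : Prop :=
  let '(i, x) := u in let '(j, y) := v in
  j = i + 1 /\ (Z.Even i \/ (Z.Odd i /\ sgnZ x + sgnZ y <> 0)).

Definition L : digraph := Digraph (Z * sgn) L_edge.

Definition phi1 : vtx L -> Z := fun v => fst v.
Definition phi2 : vtx L -> Z := fun v => fst v + 1.

(* Every vertex ((i,x),(i-1,y)) of D sits at level i, and at each level exactly one of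
   the two factors carries the constraint x + y <> 0 towards the next level.  Translations
   (exchanging the factors for odd shifts) and "local swaps", which permute the labels at
   the two levels 2m+1, 2m+2 coupled by a constraint, make D vertex transitive.  A local
   swap at the level of two in-neighbours u, u' of a vertex w exchanges them while fixing w
   and everything beyond it; mapping the tail of an arc first and then correcting its
   first edge in this way shows that Aut(D) is transitive on n-arcs for every n. *)

From Stdlib Require Import ZArith List Bool Lia Eqdep_dec.
Import ListNotations.
Open Scope Z_scope.

Section Automorphisms.

Variable G : digraph.

Lemma is_aut_id : is_aut G (fun x => x).
Proof. split; [exists (fun x => x); split; reflexivity | intros; reflexivity]. Qed.

Lemma is_aut_comp f g : is_aut G f -> is_aut G g -> is_aut G (fun x => g (f x)).
Proof.
  intros [[f' [Hf'f Hff']] Hf] [[g' [Hg'g Hgg']] Hg]; split.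
  - exists (fun y => f' (g' y)); split; intros.
    + rewrite Hg'g; apply Hf'f.
    + rewrite Hff'; apply Hgg'.
  - intros x y; rewrite (Hf x y); apply Hg.
Qed.

Lemma is_aut_edge f u v : is_aut G f -> edge G u v -> edge G (f u) (f v).
Proof. intros [_ Hf]; apply Hf. Qed.

Lemma map_arc_cons f e s :
  map_arc G f (e :: s) = (f (fst e), f (snd e)) :: map_arc G f s.
Proof. reflexivity. Qed.

Lemma map_arc_comp f g s : map_arc G (fun x => g (f x)) s = map_arc G g (map_arc G f s).
Proof. induction s as [|e s IH]; cbn; f_equal; assumption. Qed.

End Automorphisms.

Definition starts_at {G : digraph} (v : vtx G) (s : list (vtx G * vtx G)) : Prop :=
  match s with [] => True | e :: _ => v = fst e end.

Section LevelledDigraph.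

Variable G : digraph.
Variable lev : vtx G -> Z.
Hypothesis lev_edge : forall u v, edge G u v -> lev v = lev u + 1.
Hypothesis vertex_transitive : forall v w : vtx G, exists f, is_aut G f /\ f v = w.
Hypothesis in_neighbours_conjugate : forall u u' w, edge G u w -> edge G u' w ->
  exists g, is_aut G g /\ g u = u' /\ g w = w /\ (forall z, lev w < lev z -> g z = z).

Lemma map_arc_fixed g s : forall v, is_chain G s -> starts_at v s -> g v = v ->
  (forall z, lev v < lev z -> g z = z) -> map_arc G g s = s.
Proof.
  induction s as [|e s IH]; intros v Hs Hv Hgv Hg; [reflexivity|].
  destruct Hs as [He [Hlink Hs]]; cbn in Hv; subst v.
  pose proof (lev_edge _ _ He) as Hlev.
  assert (Hgw : g (snd e) = snd e) by (apply Hg; lia).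
  rewrite map_arc_cons, Hgv, Hgw, (IH (snd e) Hs Hlink Hgw); [destruct e; reflexivity|].
  intros z Hz; apply Hg; lia.
Qed.

Lemma chains_conjugate s : forall t v w, is_chain G s -> is_chain G t ->
  starts_at v s -> starts_at w t -> length s = length t ->
  exists f, is_aut G f /\ f v = w /\ map_arc G f s = t.
Proof.
  induction s as [|e s IH]; intros [|e' t] v w Hs Ht Hv Hw Hlen; try discriminate.
  - destruct (vertex_transitive v w) as [f [Hf Hfv]]; now exists f.
  - destruct Hs as [He [Hlink Hs]], Ht as [He' [Hlink' Ht]]; cbn in Hv, Hw; subst v w.
    destruct (IH t (snd e) (snd e') Hs Ht Hlink Hlink') as [f [Hf [Hfe Hft]]];
      [cbn in Hlen; lia|].
    pose proof (is_aut_edge _ _ _ _ Hf He) as Hfe_edge; rewrite Hfe in Hfe_edge.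
    destruct (in_neighbours_conjugate _ _ _ Hfe_edge He') as [g [Hg [Hgu [Hgw Hgz]]]].
    exists (fun x => g (f x)); split; [apply is_aut_comp; assumption|split; [assumption|]].
    rewrite map_arc_comp, map_arc_cons, Hft, map_arc_cons; cbn [fst snd].
    rewrite Hgu, Hfe, Hgw, (map_arc_fixed g t (snd e')); auto.
    destruct e'; reflexivity.
Qed.

Lemma arcs_from (out : forall v, exists w, edge G v w) n : forall v,
  exists s, is_arc G n s /\ starts_at v s.
Proof.
  induction n as [|n IH]; intros v.
  - exists []; repeat split.
  - destruct (out v) as [w Hvw], (IH w) as [s [[Hlen Hs] Hw]].
    exists ((v, w) :: s); repeat split; cbn; auto.
Qed.

Lemma highly_arc_transitive_of_levels a b : edge G a b -> highly_arc_transitive G.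
Proof.
  intros Hab n; split.
  - assert (out : forall v, exists w, edge G v w).
    { intros v; destruct (vertex_transitive a v) as [f [Hf <-]].
      exists (f b); apply is_aut_edge; assumption. }
    destruct (arcs_from out n a) as [s [Hs _]]; now exists s.
  - intros [|e s] [|e' t] [Hls Hs] [Hlt Ht]; subst n; try discriminate.
    + exists (fun x => x); split; [apply is_aut_id | reflexivity].
    + destruct (chains_conjugate (e :: s) (e' :: t) (fst e) (fst e')) as [f [Hf [_ Hft]]];
        cbn; auto.
      now exists f.
Qed.

End LevelledDigraph.

Definition compatible (x y : sgn) : bool := negb (sgnZ x + sgnZ y =? 0).

Lemma L_edge_iff i x j y :
  L_edge (i, x) (j, y) <-> j = i + 1 /\ (Z.even i = true \/ compatible x y = true).
Proof.
  unfold L_edge, compatible.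
  rewrite negb_true_iff, Z.eqb_neq, <- Z.even_spec, <- Z.odd_spec, <- Z.negb_even.
  destruct (Z.even i); cbn; intuition discriminate.
Qed.

Lemma L_epi (c : Z) (f : vtx L -> Z) : (forall v, f v = fst v + c) -> is_epi L Zline f.
Proof.
  intros Hf; split; [|split].
  - intros [i x] [j y] Hxy; apply L_edge_iff in Hxy; cbn; rewrite !Hf; cbn; lia.
  - intros v; exists (v - c, Zr); rewrite Hf; cbn; lia.
  - intros u v Huv; cbn in Huv; exists (u - c, Pl), (v - c, Pl).
    split; [apply L_edge_iff; split; [lia | now right] | rewrite !Hf; cbn; lia].
Qed.

Definition D : digraph := layer_prod L L phi1 phi2.

Definition level (u : vtx D) : Z := fst (fst (proj1_sig u)).

Definition pair_vtx : Type := ((Z * sgn) * (Z * sgn))%type.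

Definition valid (p : pair_vtx) : Prop := fst (fst p) = fst (snd p) + 1.

Definition pair_edge (p q : pair_vtx) : Prop :=
  L_edge (fst p) (fst q) /\ L_edge (snd p) (snd q).

Lemma vtx_eq (u v : vtx D) : proj1_sig u = proj1_sig v -> u = v.
Proof.
  destruct u as [p hp], v as [q hq]; cbn; intros ->; f_equal.
  apply UIP_dec, Z.eq_dec.
Qed.

Definition lift (F : pair_vtx -> pair_vtx) (HF : forall p, valid p -> valid (F p))
  : vtx D -> vtx D :=
  fun u => exist (fun p : pair_vtx => phi1 (fst p) = phi2 (snd p))
                 (F (proj1_sig u)) (HF _ (proj2_sig u)).

Lemma is_aut_lift F HF F' (HF' : forall p, valid p -> valid (F' p)) :
  (forall p, F' (F p) = p) -> (forall p, F (F' p) = p) ->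
  (forall p q, pair_edge p q <-> pair_edge (F p) (F q)) ->
  is_aut D (lift F HF).
Proof.
  intros HF'F HFF' Hedge; split.
  - exists (lift F' HF'); split; intros; apply vtx_eq; apply HF'F || apply HFF'.
  - intros u v; apply Hedge.
Qed.

(* An odd shift reverses the parity pattern of the constraints, so it must exchange the
   two factors; the +-1 keeps the first coordinate one level above the second. *)
Definition translate (d : Z) (p : pair_vtx) : pair_vtx :=
  let '((i, x), (j, y)) := p in
  if Z.even d then ((i + d, x), (j + d, y)) else ((j + (d + 1), y), (i + (d - 1), x)).

Lemma translate_valid d p : valid p -> valid (translate d p).
Proof.
  destruct p as [[i x] [j y]]; unfold valid, translate; cbn; intros H.
  destruct (Z.even d); cbn; lia.
Qed.

Lemma translate_opp d p : translate (- d) (translate d p) = p.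
Proof.
  destruct p as [[i x] [j y]]; unfold translate; rewrite Z.even_opp.
  destruct (Z.even d); f_equal; f_equal; lia.
Qed.

Lemma L_edge_translate e i x j y : Z.even e = true ->
  L_edge (i, x) (j, y) <-> L_edge (i + e, x) (j + e, y).
Proof.
  intros He; rewrite !L_edge_iff, Z.even_add, He.
  destruct (Z.even i); cbn; split; intros [Hj Hc]; split; auto; lia.
Qed.

Lemma translate_edge d p q : pair_edge p q <-> pair_edge (translate d p) (translate d q).
Proof.
  destruct p as [[i x] [j y]], q as [[i' x'] [j' y']]; unfold pair_edge, translate; cbn.
  destruct (Z.even d) eqn:Ed.
  - rewrite (L_edge_translate d i x i' x'), (L_edge_translate d j y j' y') by assumption.
    reflexivity.
  - assert (Hd1 : Z.even (d + 1) = true) by (rewrite Z.even_add, Ed; reflexivity).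
    assert (Hd2 : Z.even (d - 1) = true) by (rewrite Z.even_sub, Ed; reflexivity).
    rewrite (L_edge_translate (d - 1) i x i' x'), (L_edge_translate (d + 1) j y j' y')
      by assumption.
    tauto.
Qed.

Definition translation (d : Z) : vtx D -> vtx D := lift (translate d) (translate_valid d).

Lemma translation_aut d : is_aut D (translation d).
Proof.
  apply (is_aut_lift _ _ (translate (- d)) (translate_valid (- d))).
  - apply translate_opp.
  - intros p; rewrite <- (Z.opp_involutive d) at 1; apply translate_opp.
  - apply translate_edge.
Qed.

Lemma level_translation d u : level (translation d u) = level u + d.
Proof.
  destruct u as [[[i x] [j y]] hu]; unfold level, translation, lift, translate; cbn in *.
  unfold phi1, phi2 in hu; cbn in hu.
  destruct (Z.even d); cbn; lia.
Qed.

Definition relabel (A B : Z -> sgn -> sgn) (p : pair_vtx) : pair_vtx :=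
  let '((i, x), (j, y)) := p in ((i, A i x), (j, B j y)).

Lemma relabel_valid A B p : valid p -> valid (relabel A B p).
Proof. destruct p as [[i x] [j y]]; exact (fun H => H). Qed.

Definition respects_constraint (A : Z -> sgn -> sgn) : Prop :=
  forall i x y, Z.even i = false -> compatible (A i x) (A (i + 1) y) = compatible x y.

Lemma L_edge_relabel A i x j y : respects_constraint A ->
  L_edge (i, x) (j, y) <-> L_edge (i, A i x) (j, A j y).
Proof.
  intros HA; rewrite !L_edge_iff.
  split; intros [-> Hc]; split; auto; destruct (Z.even i) eqn:Ei; auto;
    rewrite ?(HA i x y Ei) in *; assumption.
Qed.

Lemma relabel_aut A B :
  (forall i x, A i (A i x) = x) -> (forall i x, B i (B i x) = x) ->
  respects_constraint A -> respects_constraint B ->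
  is_aut D (lift (relabel A B) (relabel_valid A B)).
Proof.
  intros HA HB cA cB.
  apply (is_aut_lift _ _ (relabel A B) (relabel_valid A B)).
  1, 2: intros [[i x] [j y]]; cbn; rewrite HA, HB; reflexivity.
  intros [[i x] [j y]] [[i' x'] [j' y']]; unfold pair_edge; cbn.
  rewrite (L_edge_relabel A i x i' x' cA), (L_edge_relabel B j y j' y' cB); reflexivity.
Qed.

Scheme Equality for sgn.

Definition swap (x y z : sgn) : sgn :=
  if sgn_beq z x then y else if sgn_beq z y then x else z.

Definition neg (x : sgn) : sgn := match x with Mn => Pl | Zr => Zr | Pl => Mn end.

Lemma swap_involutive x y z : swap x y (swap x y z) = z.
Proof. destruct x, y, z; reflexivity. Qed.

Lemma swap_at x y : swap x y x = y.
Proof. destruct x, y; reflexivity. Qed.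

Lemma compatible_swap x y u v :
  compatible (swap x y u) (swap (neg x) (neg y) v) = compatible u v.
Proof. destruct x, y, u, v; reflexivity. Qed.

Lemma compatible_swap_neg x y u v :
  compatible (swap (neg x) (neg y) u) (swap x y v) = compatible u v.
Proof. destruct x, y, u, v; reflexivity. Qed.

Lemma swap_neg_fixed x x' c :
  compatible x c = true -> compatible x' c = true -> swap (neg x) (neg x') c = c.
Proof. destruct x, x', c; cbn; congruence. Qed.

(* The constraint couples the levels 2m+1 and 2m+2; [partner k] is the other level of
   the pair containing k, where the swap has to be conjugated by [neg]. *)
Definition partner (k : Z) : Z := if Z.even k then k - 1 else k + 1.

Definition local_swap (k : Z) (x y : sgn) (i : Z) : sgn -> sgn :=
  if i =? k then swap x y
  else if i =? partner k then swap (neg x) (neg y)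
  else fun z => z.

Lemma local_swap_involutive k x y i z : local_swap k x y i (local_swap k x y i z) = z.
Proof.
  unfold local_swap; destruct (i =? k), (i =? partner k); auto using swap_involutive.
Qed.

Lemma local_swap_at k x y : local_swap k x y k x = y.
Proof. unfold local_swap; rewrite Z.eqb_refl; apply swap_at. Qed.

Lemma even_double i : Z.even i = true -> exists m, i = 2 * m.
Proof. intros H; apply Z.even_spec, H. Qed.

Lemma odd_double i : Z.even i = false -> exists m, i = 2 * m + 1.
Proof. intros H; apply Z.odd_spec; rewrite <- Z.negb_even, H; reflexivity. Qed.

Lemma local_swap_respects k x y : respects_constraint (local_swap k x y).
Proof.
  intros i u v Hi; destruct (odd_double i Hi) as [m ->].
  unfold local_swap, partner; destruct (Z.even k) eqn:Ek;
    [destruct (even_double k Ek) as [n ->] | destruct (odd_double k Ek) as [n ->]];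
    repeat match goal with |- context [?a =? ?b] => destruct (Z.eqb_spec a b) end;
    try (exfalso; lia); auto using compatible_swap, compatible_swap_neg.
Qed.

Lemma local_swap_above k x y i z : k + 1 < i -> local_swap k x y i z = z.
Proof.
  intros H; unfold local_swap, partner.
  destruct (Z.eqb_spec i k), (Z.even k), (Z.eqb_spec i (k - 1)), (Z.eqb_spec i (k + 1));
    try lia; reflexivity.
Qed.

(* Two predecessors x, x' of c at level k are both compatible with c when the constraint is
   active (k odd); then the conjugated swap at level k + 1 cannot move c. *)
Lemma local_swap_fixes_successor k x x' c :
  L_edge (k, x) (k + 1, c) -> L_edge (k, x') (k + 1, c) -> local_swap k x x' (k + 1) c = c.
Proof.
  rewrite !L_edge_iff; intros [_ Hx] [_ Hx']; unfold local_swap, partner.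
  destruct (Z.eqb_spec (k + 1) k); [lia|].
  destruct (Z.even k).
  - destruct (Z.eqb_spec (k + 1) (k - 1)); [lia | reflexivity].
  - rewrite Z.eqb_refl; apply swap_neg_fixed; intuition discriminate.
Qed.

Definition local_swaps (k : Z) (x x' : sgn) (l : Z) (y y' : sgn) : vtx D -> vtx D :=
  lift (relabel (local_swap k x x') (local_swap l y y')) (relabel_valid _ _).

Lemma local_swaps_aut k x x' l y y' : is_aut D (local_swaps k x x' l y y').
Proof. apply relabel_aut; auto using local_swap_involutive, local_swap_respects. Qed.

Lemma same_level_conjugate (u w : vtx D) : level u = level w ->
  exists f, is_aut D f /\ f u = w.
Proof.
  destruct u as [[[i a] [j b]] hu], w as [[[i' x] [j' y]] hw]; unfold level; cbn.
  intros <-; unfold phi1, phi2 in hu, hw; cbn in hu, hw.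
  assert (j' = j) as -> by lia.
  exists (local_swaps i a x j b y); split; [apply local_swaps_aut|].
  apply vtx_eq; cbn; rewrite !local_swap_at; reflexivity.
Qed.

Lemma D_vertex_transitive (v w : vtx D) : exists f, is_aut D f /\ f v = w.
Proof.
  set (d := level w - level v).
  destruct (same_level_conjugate (translation d v) w) as [g [Hg Hgv]].
  { rewrite level_translation; unfold d; lia. }
  exists (fun z => g (translation d z)); split; [|assumption].
  apply is_aut_comp; [apply translation_aut | assumption].
Qed.

Lemma level_edge u v : edge D u v -> level v = level u + 1.
Proof.
  destruct u as [[[i x] [j y]] hu], v as [[[i' x'] [j' y']] hv]; unfold level; cbn.
  intros [H _]; apply L_edge_iff in H; lia.
Qed.

Lemma D_in_neighbours_conjugate (u u' w : vtx D) : edge D u w -> edge D u' w ->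
  exists g, is_aut D g /\ g u = u' /\ g w = w /\ (forall z, level w < level z -> g z = z).
Proof.
  destruct u as [[[i a] [j b]] hu], u' as [[[i' a'] [j' b']] hu'],
    w as [[[k c] [l d]] hw].
  unfold phi1, phi2 in hu, hu', hw; cbn in hu, hu', hw; cbn.
  intros [E1 E2] [E3 E4].
  destruct (proj1 (L_edge_iff _ _ _ _) E1) as [-> _].
  destruct (proj1 (L_edge_iff _ _ _ _) E2) as [-> _].
  destruct (proj1 (L_edge_iff _ _ _ _) E3) as [Hi _].
  destruct (proj1 (L_edge_iff _ _ _ _) E4) as [Hj _].
  assert (i' = i) as -> by lia; assert (j' = j) as -> by lia.
  exists (local_swaps i a a' j b b'); split; [apply local_swaps_aut|].
  split; [|split].
  - apply vtx_eq; cbn; rewrite !local_swap_at; reflexivity.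
  - apply vtx_eq; cbn; rewrite !local_swap_fixes_successor; auto.
  - intros [[[k' e] [l' f]] hz]; unfold level, phi1, phi2 in *; cbn in *; intros Hz.
    apply vtx_eq; cbn; rewrite !local_swap_above by lia; reflexivity.
Qed.

Definition vtx0 : vtx D := exist _ ((0, Pl), (-1, Pl)) eq_refl.
Definition vtx1 : vtx D := exist _ ((1, Pl), (0, Pl)) eq_refl.

Lemma edge_vtx0_vtx1 : edge D vtx0 vtx1.
Proof. split; apply L_edge_iff; split; auto. Qed.

Theorem mainTheorem2 :
  is_epi L Zline phi1 /\ is_epi L Zline phi2 /\
  highly_arc_transitive (layer_prod L L phi1 phi2).
Proof.
  split; [|split].
  - apply (L_epi 0); intros v; symmetry; apply Z.add_0_r.
  - apply (L_epi 1); reflexivity.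
  - apply (highly_arc_transitive_of_levels D level level_edge D_vertex_transitive
             D_in_neighbours_conjugate vtx0 vtx1 edge_vtx0_vtx1).
Qed.
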